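(* Let $(X,d_X,\mu)$ be a compact metric measure space and let $\iota:X\to Z$ be an isometry onto its image $X':=\iota(X)\subset Z$ in a metric space $(Z,d_Z)$. Let $D^{X'}$ be the distance kernel operator of $(X',d_Z,\iota_\#\mu)$. Then there is a bijection $\iota^*:L^2(X,\mu)\to L^2(X',\iota_\#\mu)$ such that $D^{X'}\circ\iota^*=\iota^*\circ D^X$. In particular, $\phi$ is an eigenfunction of $D^X$ with eigenvalue $\lambda$ if and only if $\iota^*\phi$ is an eigenfunction of $D^{X'}$ with eigenvalue $\lambda$, and, denoting by $\Phi_k:X\to\mathbb{C}^k$ and $\Phi'_k:X'\to\mathbb{C}^k$ the distance kernel embeddings of $X$ and $X'$, we have $\Phi_k(X)=\Phi'_k(X')$.
   Context: For a compact metric measure space $(X,d,\mu)$, the distance kernel operator is $(D^Xf)(x)=\int_X f(y)d(x,y)\,d\mu(y)$ on $L^2(X,\mu)$. Its eigenvalues $\lambda_i$ are real and ordered by decreasing absolute value (assumed non-zero with distinct absolute values among the top $k$), with $L^2$-orthonormal real eigenfunctions $\phi_i$ whose signs are fixed by $\langle\phi_i,|\phi_i|\rangle>0$. With $\alpha_i=\sqrt{\lambda_i}\phi_i$ (square root with positive imaginary part if $\lambda_i<0$), the distance kernel embedding is $\Phi_k(x)=(\alpha_1(x),\dots,\alpha_k(x))$. $\iota_\#\mu$ denotes the pushforward measure. *)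

From HB Require Import structures.
From mathcomp Require Import all_boot all_order all_algebra.
From mathcomp Require Import all_classical all_reals all_analysis.
From mathcomp Require complex.

Set Implicit Arguments.
Unset Strict Implicit.
Unset Printing Implicit Defensive.
Import Order.TTheory GRing.Theory Num.Theory.
Local Open Scope classical_set_scope.
Local Open Scope ring_scope.

Section Metric.
Context {R : realType} {T : Type}.
Variable d : T -> T -> R.

Definition is_metric : Prop :=
  [/\ forall x y, 0 <= d x y,
      forall x y, d x y = 0 <-> x = y,
      forall x y, d x y = d y x &
      forall x y z, d x z <= d x y + d y z].

Definition dopen : set (set T) :=
  [set A | forall x, A x -> exists2 e : R, 0 < e & [set y | d x y < e] `<=` A].

Definition dcompact : Prop :=
  forall (F : set (set T)), F `<=` dopen -> setT `<=` \bigcup_(A in F) A ->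
    exists s : seq (set T), (forall A, A \in s -> F A) /\
                            setT `<=` \bigcup_(A in [set` s]) A.
End Metric.

Definition borelT {R : realType} {T : pointedType} (d : T -> T -> R) :=
  g_sigma_algebraType (dopen d).

Definition bdist {R : realType} {T : pointedType} (d : T -> T -> R) :
  borelT d -> borelT d -> R := d.
Arguments bdist {R T} d _ _.

Definition imgT {X : pointedType} {Z : choiceType} (iota : X -> Z) :=
  {z : Z | `[< exists x, iota x = z >]}.

Section imgT_inst.
Context {X : pointedType} {Z : choiceType} (iota : X -> Z).
Lemma imgT_point_subproof : `[< exists x, iota x = iota point >].
Proof. by apply/asboolP; exists point. Qed.
HB.instance Definition _ := Choice.on (imgT iota).
HB.instance Definition _ :=
  isPointed.Build (imgT iota) (exist _ (iota point) imgT_point_subproof).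
End imgT_inst.

Lemma imgT_in_subproof {X : pointedType} {Z : choiceType} (iota : X -> Z) x :
  `[< exists y, iota y = iota x >].
Proof. by apply/asboolP; exists x. Qed.
Definition corestr {X : pointedType} {Z : choiceType} (iota : X -> Z)
  (x : X) : imgT iota := exist _ (iota x) (imgT_in_subproof iota x).

Definition subdist {R : realType} {X : pointedType} {Z : choiceType}
  (iota : X -> Z) (dZ : Z -> Z -> R) (u v : imgT iota) : R :=
  dZ (val u) (val v).
Arguments subdist {R X Z} iota dZ u v.
Arguments corestr {X Z} iota x.

Section DistanceKernel.
Context {R : realType} {dd : measure_display} {T : measurableType dd}.
Variables (dist : T -> T -> R) (mu : {measure set T -> \bar R}).

Definition distker (f : T -> R) (x : T) : R :=
  Rintegral mu setT (fun y => f y * dist x y).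

Definition inner2 (f g : T -> R) : R := Rintegral mu setT (fun y => f y * g y).

Definition is_eigenfun (f : T -> R) (l : R) : Prop :=
  [/\ f \in Lfun mu 2%:E,
      ~ (f = cst 0 %[ae mu]) &
      distker f = (fun x => l * f x) %[ae mu]].

(* (l, phi) are the top k eigenpairs of D, as in the paper's convention:
   orthonormal real eigenfunctions (taken as the representatives satisfying
   the eigen-equation at every point), non-zero eigenvalues ordered by
   strictly decreasing absolute value, each l i maximal in absolute value
   among eigenvalues of eigenfunctions orthogonal to the previous ones, and
   signs fixed by <phi_i, |phi_i|> > 0. *)
Definition DK_data (k : nat) (l : 'I_k -> R) (phi : 'I_k -> T -> R) : Prop :=
  [/\ forall i, phi i \in Lfun mu 2%:E,
      forall i j, inner2 (phi i) (phi j) = (i == j)%:R &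
      forall i x, distker (phi i) x = l i * phi i x] /\
  [/\ forall i, l i != 0,
      forall i j : 'I_k, (i < j)%N -> `|l j| < `|l i|,
      forall (i : 'I_k) (psi : T -> R) (nu : R), is_eigenfun psi nu ->
        (forall j : 'I_k, (j < i)%N -> inner2 psi (phi j) = 0) ->
        `|nu| <= `|l i| &
      forall i, 0 < inner2 (phi i) (fun x => `|phi i x|)].
End DistanceKernel.

Definition csqrt_scale {R : realType} (l v : R) : complex.complex R :=
  if 0 <= l then complex.Complex (Num.sqrt l * v) 0
  else complex.Complex 0 (Num.sqrt (- l) * v).

Definition DKE {R : realType} {T : Type} (k : nat) (l : 'I_k -> R)
  (phi : 'I_k -> T -> R) (x : T) : 'rV[complex.complex R]_k :=
  \row_i csqrt_scale (l i) (phi i x).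

From HB Require Import structures.
From mathcomp Require Import all_boot all_order all_algebra.
From mathcomp Require Import all_classical all_reals all_analysis.
From mathcomp Require complex.
Import Order.TTheory GRing.Theory Num.Theory.
Local Open Scope classical_set_scope.
Local Open Scope ring_scope.

Import HBNNSimple.

(* Since [iota] is an isometry, its corestriction [X -> X'] is a bijection
   whose inverse is again an isometry; both are Borel measurable and [nu] is
   the image of [mu].  Precomposition with a measurable bijection [p] pushing
   [mu] to [nu] preserves the integral of every function, because the
   nonnegative simple functions below [g] and below [g \o p] correspond; hence
   it preserves null sets, L^2 and inner products, and when [p] is moreover an
   isometry it intertwines the distance kernel operators.  So
   [iota^* f := f \o corestr_inv iota] carries every eigenpair and every family
   of top eigenpairs across, and the two embeddings differ only by the
   reparametrization [corestr iota] of their domain. *)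

Section precomp_nnsfun.
Context {R : realType} {d1 d2 : measure_display}
  {T1 : measurableType d1} {T2 : measurableType d2}.
Variables (p : T1 -> T2) (mp : measurable_fun setT p) (h : {nnsfun T2 >-> R}).

Definition precomp := h \o p.

Let precomp_measurable : measurable_fun setT precomp.
Proof. exact: measurableT_comp. Qed.
HB.instance Definition _ := isMeasurableFun.Build _ _ _ _ precomp
  precomp_measurable.

Let precomp_finite_image : finite_set (range precomp).
Proof.
by apply: sub_finite_set (fimfunP h) => _ [x _ <-]; exists (p x).
Qed.
HB.instance Definition _ := FiniteImage.Build _ _ precomp precomp_finite_image.

Let precomp_ge0 x : 0 <= precomp x. Proof. by []. Qed.
HB.instance Definition _ := isNonNegFun.Build _ _ precomp precomp_ge0.

Definition precomp_nnsfun : {nnsfun T1 >-> R} := [nnsfun of precomp].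
End precomp_nnsfun.
Arguments precomp_nnsfun {R d1 d2 T1 T2 p} mp h.

Lemma comp_cancel {A B C : Type} {f : A -> B} {g : B -> A} :
  cancel f g -> forall h : A -> C, h \o g \o f = h.
Proof. by move=> fK h; apply: funext => x /=; rewrite fK. Qed.

Section measure_isomorphism.
Context {R : realType} {d1 d2 : measure_display}
  {T1 : measurableType d1} {T2 : measurableType d2}.
Context {mu : {measure set T1 -> \bar R}} {nu : {measure set T2 -> \bar R}}.
Context {p : T1 -> T2} {q : T2 -> T1}.
Hypotheses (mp : measurable_fun setT p) (mq : measurable_fun setT q).
Hypotheses (pK : cancel p q) (qK : cancel q p).
Hypothesis nuE : forall A, measurable A -> nu A = mu (p @^-1` A).

Lemma sintegral_comp (h : {nnsfun T2 >-> R}) :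
  sintegral nu h = sintegral mu (precomp_nnsfun mp h).
Proof.
apply: eq_fsbigr => r _; congr (_ * _)%E.
by rewrite nuE //; exact: measurable_funPTI.
Qed.

Lemma ereal_sup_sintegral_comp (g : T2 -> \bar R) :
  ereal_sup [set sintegral nu h | h in
    [set h : {nnsfun T2 >-> R} | forall y, ((h y)%:E <= g y)%E]] =
  ereal_sup [set sintegral mu h | h in
    [set h : {nnsfun T1 >-> R} | forall x, ((h x)%:E <= g (p x))%E]].
Proof.
congr ereal_sup; apply/seteqP; split => _ [h /= hg <-].
  exists (precomp_nnsfun mp h); last by rewrite sintegral_comp.
  by move=> x; rewrite /= /precomp /= hg.
exists (precomp_nnsfun mq h); first by move=> y; have := hg (q y); rewrite qK.
rewrite sintegral_comp; apply: eq_fsbigr => r _; congr (_ * _)%E.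
by congr (mu _); apply/seteqP; split => x /=; rewrite /precomp /= pK.
Qed.

Lemma integral_comp (g : T2 -> \bar R) :
  (\int[nu]_(y in setT) g y = \int[mu]_(x in setT) (g \o p) x)%E.
Proof.
rewrite /integral !patch_setT (funepos_comp g p) (funeneg_comp g p).
by rewrite !ereal_sup_sintegral_comp.
Qed.

Lemma Rintegral_comp (g : T2 -> R) :
  Rintegral nu setT g = Rintegral mu setT (g \o p).
Proof. by rewrite /Rintegral integral_comp. Qed.

Lemma ae_comp (P : T2 -> Prop) :
  (\forall y \ae nu, P y) <-> (\forall x \ae mu, P (p x)).
Proof.
split=> -[A [mA A0 PA]].
  have mpA : measurable (p @^-1` A) by rewrite -[_ @^-1` _]setTI; exact: mp.
  by exists (p @^-1` A); split; rewrite -?nuE// => x /= Px; apply: PA.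
have mqA : measurable (q @^-1` A) by rewrite -[_ @^-1` _]setTI; exact: mq.
exists (q @^-1` A); split => //.
  rewrite nuE// -A0; congr (mu _).
  by apply/seteqP; split => x /=; rewrite pK.
by move=> y /= Py; apply: PA => /=; rewrite qK.
Qed.

Lemma ae_eq_comp (g h : T2 -> R) :
  (g = h %[ae nu]) <-> (g \o p = h \o p %[ae mu]).
Proof. exact: (ae_comp (fun y => setT y -> g y = h y)). Qed.

Lemma Lfun_comp (r : R) (g : T2 -> R) :
  (g \in Lfun nu r%:E) = (g \o p \in Lfun mu r%:E).
Proof.
have finite_normE : (g \in finLfun nu r%:E) = (g \o p \in finLfun mu r%:E).
  rewrite /finLfun !unfold_in /= /in_set /finite_norm unlock /=.
  by rewrite !integral_comp.
rewrite !inE finite_normE; congr (_ && _).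
rewrite /mfun !unfold_in /in_set /=; apply/asboolP/asboolP => mg.
  exact: measurableT_comp.
by rewrite -(comp_cancel qK g); exact: measurableT_comp.
Qed.

Context {dist1 : T1 -> T1 -> R} {dist2 : T2 -> T2 -> R}.
Hypothesis p_isometry : forall x y, dist2 (p x) (p y) = dist1 x y.

Lemma distker_comp (g : T2 -> R) :
  distker dist2 nu g \o p = distker dist1 mu (g \o p).
Proof.
apply: funext => x /=; rewrite /distker Rintegral_comp.
by apply: eq_Rintegral => y _ /=; rewrite p_isometry.
Qed.

Lemma inner2_comp (g h : T2 -> R) : inner2 nu g h = inner2 mu (g \o p) (h \o p).
Proof. exact: Rintegral_comp. Qed.

Lemma is_eigenfun_comp (g : T2 -> R) l :
  is_eigenfun dist2 nu g l <-> is_eigenfun dist1 mu (g \o p) l.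
Proof.
rewrite /is_eigenfun -distker_comp Lfun_comp.
split=> -[Lg g_neq0 eig_g]; split=> //.
- by move=> /(ae_eq_comp g (cst 0)).
- exact/(ae_eq_comp _ (fun y => l * g y)).
- by move=> /(ae_eq_comp g (cst 0)).
- exact/(ae_eq_comp _ (fun y => l * g y)).
Qed.

Lemma DK_data_comp k (l : 'I_k -> R) (ph : 'I_k -> T2 -> R) :
  DK_data dist2 nu l ph <-> DK_data dist1 mu l (fun i => ph i \o p).
Proof.
split=> -[[L2 orth eig] [l_neq0 l_decr l_max sign]]; split; split=> //.
- by move=> i; rewrite -Lfun_comp.
- by move=> i j; rewrite -inner2_comp.
- by move=> i x; rewrite -distker_comp /= eig.
- move=> i f nuf eig_f orth_f; rewrite -(comp_cancel pK f) in eig_f orth_f.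
  apply: (l_max i (f \o q)); first exact/is_eigenfun_comp.
  by move=> j ji; rewrite inner2_comp; apply: orth_f.
- by move=> i; rewrite -(inner2_comp (ph i) (fun y => `|ph i y|)).
- by move=> i; rewrite Lfun_comp.
- by move=> i j; rewrite inner2_comp.
- by move=> i y; have := eig i (q y); rewrite -distker_comp /= qK.
- move=> i g nug /is_eigenfun_comp eig_g orth_g.
  by apply: (l_max i (g \o p)) => // j ji; rewrite -inner2_comp; apply: orth_g.
- by move=> i; rewrite (inner2_comp (ph i) (fun y => `|ph i y|)).
Qed.

End measure_isomorphism.

Lemma range_DKE_comp {R : realType} {T U : Type} {k} {l : 'I_k -> R}
    {ph : 'I_k -> U -> R} {s : T -> U} {s' : U -> T} :
  cancel s' s -> range (DKE l (fun i => ph i \o s)) = range (DKE l ph).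
Proof.
move=> s'K; apply/seteqP; split => _ [x _ <-].
  by exists (s x) => //; apply/rowP => i; rewrite !mxE.
by exists (s' x) => //; apply/rowP => i; rewrite !mxE /= s'K.
Qed.

Lemma isometry_borel_measurable {R : realType} {T1 T2 : pointedType}
    {d1 : T1 -> T1 -> R} {d2 : T2 -> T2 -> R} {f : T1 -> T2} :
  (forall x y, d2 (f x) (f y) = d1 x y) ->
  @measurable_fun _ _ (borelT d1) (borelT d2) setT f.
Proof.
move=> f_isometry.
apply: (@measurability _ _ (borelT d1) (borelT d2) _ _ (dopen d2)) => //.
move=> _ [B oB <-]; apply: sub_sigma_algebra => x [_ Bfx].
have [e e0 sB] := oB _ Bfx; exists e => // y /= dxy; split => //.
by apply: sB => /=; rewrite f_isometry.
Qed.

Section corestriction.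
Context {R : realType} {X : pointedType} {Z : choiceType}
  {dX : X -> X -> R} {dZ : Z -> Z -> R} {iota : X -> Z}.
Hypothesis dX_metric : is_metric dX.
Hypothesis iota_isometry : forall x y, dZ (iota x) (iota y) = dX x y.

Definition corestr_inv (u : imgT iota) : X :=
  proj1_sig (cid (asboolW (proj2_sig u))).

Lemma corestr_invE u : iota (corestr_inv u) = val u.
Proof. by rewrite /corestr_inv; case: cid. Qed.

Lemma isometry_inj : injective iota.
Proof.
have [_ dX_eq0 _ _] := dX_metric.
move=> x y iota_xy; apply/dX_eq0.
by rewrite -iota_isometry iota_xy iota_isometry dX_eq0.
Qed.

Lemma corestr_invK : cancel corestr_inv (corestr iota).
Proof. by move=> u; apply: val_inj; exact: corestr_invE. Qed.

Lemma corestrK : cancel (corestr iota) corestr_inv.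
Proof. by move=> x; apply: isometry_inj; rewrite corestr_invE. Qed.

Lemma subdist_corestr x y :
  subdist iota dZ (corestr iota x) (corestr iota y) = dX x y.
Proof. exact: iota_isometry. Qed.

Lemma dX_corestr_inv u v :
  dX (corestr_inv u) (corestr_inv v) = subdist iota dZ u v.
Proof. by rewrite /subdist -iota_isometry !corestr_invE. Qed.

End corestriction.
Arguments corestr_inv {X Z} iota u.

Theorem proposition5p7 (R : realType) (X : pointedType) (dX : X -> X -> R)
  (mu : {finite_measure set borelT dX -> \bar R})
  (Z : choiceType) (dZ : Z -> Z -> R) (iota : X -> Z)
  (nu : {measure set borelT (subdist iota dZ) -> \bar R}) :
  is_metric dX -> dcompact dX -> is_metric dZ ->
  (forall x y, dZ (iota x) (iota y) = dX x y) ->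
  (forall A, measurable A -> nu A = mu (corestr iota @^-1` A)) ->
  exists J : (borelT dX -> R) -> (borelT (subdist iota dZ) -> R),
    [/\ [/\ (* iota^* maps L^2(X, mu) to L^2(X', iota_# mu) ... *)
        forall f, f \in Lfun mu 2%:E -> J f \in Lfun nu 2%:E,
        (* ... is well defined on classes ... *)
        forall f g, f \in Lfun mu 2%:E -> g \in Lfun mu 2%:E ->
          (f = g %[ae mu]) -> (J f = J g %[ae nu]),
        (* ... injective on classes ... *)
        forall f g, f \in Lfun mu 2%:E -> g \in Lfun mu 2%:E ->
          (J f = J g %[ae nu]) -> (f = g %[ae mu]) &
        (* ... surjective on classes ... *)
        forall g, g \in Lfun nu 2%:E ->
          exists2 f, f \in Lfun mu 2%:E & (J f = g %[ae nu])],
        (* D^{X'} o iota^* = iota^* o D^X *)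
        forall f, f \in Lfun mu 2%:E ->
          (distker (bdist (subdist iota dZ)) nu (J f) = J (distker (bdist dX) mu f) %[ae nu]),
        (* eigenfunctions correspond *)
        forall f (l : R), f \in Lfun mu 2%:E ->
          (is_eigenfun (bdist dX) mu f l <-> is_eigenfun (bdist (subdist iota dZ)) nu (J f) l) &
        (* distance kernel embeddings have the same image *)
        forall k (l : 'I_k -> R),
          (forall phi, DK_data (bdist dX) mu l phi ->
             exists phi', [/\ DK_data (bdist (subdist iota dZ)) nu l phi',
                              forall i, (phi' i = J (phi i) %[ae nu]) &
                              range (DKE l phi) = range (DKE l phi')]) /\
          (forall phi', DK_data (bdist (subdist iota dZ)) nu l phi' ->
             exists phi, [/\ DK_data (bdist dX) mu l phi,
                             forall i, (phi' i = J (phi i) %[ae nu]) &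
                             range (DKE l phi) = range (DKE l phi')])].
Proof.
move=> dX_metric _ _ iota_isometry nuE.
pose X' := borelT (subdist iota dZ).
have pK : cancel (corestr iota : borelT dX -> X') (corestr_inv iota).
  exact: corestrK dX_metric iota_isometry.
have qK : cancel (corestr_inv iota : X' -> borelT dX) (corestr iota).
  exact: corestr_invK.
have mp := isometry_borel_measurable (subdist_corestr iota_isometry).
have mq := isometry_borel_measurable (dX_corestr_inv iota_isometry).
have corestr_isometry x y :
  bdist (subdist iota dZ) (corestr iota x) (corestr iota y) = bdist dX x y.
  exact: subdist_corestr.
have JK := comp_cancel pK.
have LfunE := Lfun_comp mp mq pK qK nuE.
have ae_eqE := ae_eq_comp mp mq pK qK nuE.
have DK_dataE := DK_data_comp mp mq pK qK nuE corestr_isometry.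
exists (fun f => f \o corestr_inv iota); split; first split.
- by move=> f Lf; rewrite LfunE JK.
- by move=> f g _ _ fg; apply/ae_eqE; rewrite !JK.
- by move=> f g _ _ /ae_eqE; rewrite !JK.
- move=> g; rewrite LfunE => Lg.
  by exists (g \o corestr iota); rewrite ?(comp_cancel qK)//; exact: ae_eq_refl.
- move=> f _; apply/ae_eqE.
  rewrite (distker_comp mp mq pK qK nuE corestr_isometry) !JK.
  exact: ae_eq_refl.
- move=> f l _.
  by rewrite (is_eigenfun_comp mp mq pK qK nuE corestr_isometry) JK.
- move=> k l; split=> [ph Dph | ph' Dph'].
  + exists (fun i => ph i \o corestr_inv iota); split => //.
    * by apply/DK_dataE; under eq_fun do rewrite JK.
    * by move=> i; exact: ae_eq_refl.
    * by rewrite (range_DKE_comp pK).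
  + exists (fun i => ph' i \o corestr iota); split.
    * exact/DK_dataE.
    * by move=> i; rewrite (comp_cancel qK); exact: ae_eq_refl.
    * by rewrite (range_DKE_comp qK).
Qed.
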